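(* Let $p$ be an odd prime. Then the edge set of the complete graph $K_{p^2}$ can be partitioned into $(p^2-1)/4$ subgraphs, each isomorphic to $C_p \square C_p$.
   Context: $C_n$ denotes the cycle graph on $n$ vertices and $K_m$ the complete graph on $m$ vertices. For graphs $G=(V,E)$ and $G'=(V',E')$, the Cartesian product $G \square G'$ has vertex set $V\times V'$, with $\{(v,v'),(w,w')\}$ an edge iff either $\{v,w\}\in E$ and $v'=w'$, or $v=w$ and $\{v',w'\}\in E'$. Partitioning $K_m$ into copies of $G$ means decomposing its edge set into edge-disjoint subgraphs (on the vertex set of $K_m$) each isomorphic to $G$. *)

From mathcomp Require Import all_boot.
Set Implicit Arguments. Unset Strict Implicit. Unset Printing Implicit Defensive.

Definition cycle_adj (n : nat) : rel 'I_n :=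
  fun x y => (val y == x.+1 %% n) || (val x == y.+1 %% n).

Definition cart_adj (T U : finType) (e : rel T) (e' : rel U) : rel (T * U) :=
  fun a b => (e a.1 b.1 && (a.2 == b.2)) || ((a.1 == b.1) && e' a.2 b.2).

Definition image_edges (T : finType) (m : nat) (e : rel T) (f : T -> 'I_m)
  : {set {set 'I_m}} :=
  [set [set f a; f b] | a in T, b in T & e a b].

Definition edge_decomposition (m k : nat) (T : finType) (e : rel T)
  (F : 'I_k -> T -> 'I_m) : Prop :=
  (forall i, injective (F i)) /\
  (forall i, forall E, E \in image_edges e (F i) -> #|E| = 2) /\
  (forall E : {set 'I_m}, #|E| = 2 -> exists! i, E \in image_edges e (F i)).

(* Identify the vertices of K_(p^2) with Z_p^2.  For a, b in Z_p^2 with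
   det (a, b) invertible, (x, y) |-> x a + y b embeds C_p [] C_p so that its
   edges are exactly the pairs {v, v + d} with d in {a, -a, b, -b}.  Copies
   built from pairs (a_i, b_i) therefore decompose K_(p^2) as soon as the sets
   {a_i, -a_i, b_i, -b_i} partition Z_p^2 minus 0.  Writing p = 2h + 1, every
   class {d, -d} of nonzero vectors has exactly one representative (x, y) with
   1 <= x <= h, or with x = 0 and 1 <= y <= h.  Pairing (x, 2t) with (x, 2t+1)
   for t < h, and (x, 2h) with (0, x), gives h (h + 1) = (p^2 - 1) / 4 pairs,
   each of determinant x or x^2, hence invertible. *)

From mathcomp Require Import all_boot all_algebra.
From mathcomp Require Import zify ring.
Set Implicit Arguments. Unset Strict Implicit. Unset Printing Implicit Defensive.
Import GRing.Theory.

Lemma cycle_adjE m (x y : 'I_m) : cycle_adj x y = (y == ordS x) || (x == ordS y).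
Proof. by []. Qed.

Lemma cycle_adj_irr m : 1 < m -> irreflexive (@cycle_adj m).
Proof.
move=> m_gt1 x; rewrite cycle_adjE orbb -val_eqE /=.
case: (ltngtP x.+1 m) => [lt_xm | | eq_xm]; first by rewrite modn_small // ltn_eqF.
  by rewrite ltnNge ltn_ord.
by rewrite eq_xm modnn; apply/eqP=> x0; rewrite -eq_xm x0 in m_gt1.
Qed.

Lemma cart_adj_irr (T U : finType) (e : rel T) (e' : rel U) :
  irreflexive e -> irreflexive e' -> irreflexive (cart_adj e e').
Proof. by move=> eI e'I x; rewrite /cart_adj eI e'I andbF. Qed.

Lemma set2_inj (T : finType) (x y u v : T) :
  [set x; y] = [set u; v] -> (x = u /\ y = v) \/ (x = v /\ y = u).
Proof.
move=> E; have /set2P x_uv : x \in [set u; v] by rewrite -E set21.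
have /set2P y_uv : y \in [set u; v] by rewrite -E set22.
have /set2P u_xy : u \in [set x; y] by rewrite E set21.
have /set2P v_xy : v \in [set x; y] by rewrite E set22.
by move: x_uv y_uv u_xy v_xy => [] ? [] ? [] ? [] ?; subst; auto.
Qed.

Lemma card_ord_bij (T : finType) n : #|T| = n -> exists f : T -> 'I_n, bijective f.
Proof.
move=> cardT; exists (fun x => cast_ord cardT (enum_rank x)).
apply: inj_card_bij; last by rewrite card_ord cardT.
by move=> x y /cast_ord_inj /enum_rank_inj.
Qed.

Lemma card_ord_pair n : #|{: 'I_n * 'I_n}| = n ^ 2.
Proof. by rewrite card_prod card_ord mulnn. Qed.

Local Open Scope ring_scope.

Section CycleGrid.
Variables (V : zmodType) (m : nat).
Hypothesis expV : forall v : V, v *+ m = 0.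

Lemma mulrn_ordS (v : V) (x : 'I_m) : v *+ ordS x = v *+ x + v.
Proof.
rewrite -mulrSr /=; case: (ltngtP x.+1 m) => [lt_xm | | eq_xm].
- by rewrite modn_small.
- by rewrite ltnNge ltn_ord.
by rewrite eq_xm modnn expV.
Qed.

Definition grid (a b : V) (w : 'I_m * 'I_m) : V := a *+ w.1 + b *+ w.2.

Definition steps (a b : V) : seq V := [:: a; - a; b; - b].

Local Notation torus_adj := (cart_adj (@cycle_adj m) (@cycle_adj m)).

Lemma grid_ordSl a b x y : grid a b (ordS x, y) = grid a b (x, y) + a.
Proof. by rewrite /grid /= mulrn_ordS addrAC. Qed.

Lemma grid_ordSr a b x y : grid a b (x, ordS y) = grid a b (x, y) + b.
Proof. by rewrite /grid /= mulrn_ordS addrA. Qed.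

Lemma steps_opp a b d : (- d \in steps a b) = (d \in steps a b).
Proof.
rewrite !inE !eqr_oppLR !opprK.
by case: (d == a); case: (d == - a); case: (d == b); case: (d == - b).
Qed.

Lemma grid_adj_steps a b w w' :
  torus_adj w w' -> grid a b w' - grid a b w \in steps a b.
Proof.
case: w w' => [x y] [x' y']; rewrite /cart_adj !cycle_adjE /=.
case/orP=> /andP[]; [case/orP=> /eqP-> /eqP-> | move=> /eqP-> /orP[] /eqP->].
- by rewrite grid_ordSl addrC addKr inE eqxx.
- by rewrite grid_ordSl opprD addNKr !inE eqxx orbT.
- by rewrite grid_ordSr addrC addKr !inE eqxx !orbT.
by rewrite grid_ordSr opprD addNKr !inE eqxx !orbT.
Qed.

Lemma grid_steps_adj a b w d : d \in steps a b ->
  exists2 w', torus_adj w w' & grid a b w' = grid a b w + d.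
Proof.
case: w => x y; rewrite !inE => /or4P[] /eqP->.
- by exists (ordS x, y); rewrite ?grid_ordSl // /cart_adj !cycle_adjE !eqxx.
- exists (ord_pred x, y); first by rewrite /cart_adj !cycle_adjE ord_predK !eqxx ?orbT.
  by rewrite -{2}[x]ord_predK grid_ordSl addrK.
- by exists (x, ordS y); rewrite ?grid_ordSr // /cart_adj !cycle_adjE !eqxx ?orbT.
exists (x, ord_pred y); first by rewrite /cart_adj !cycle_adjE ord_predK !eqxx ?orbT.
by rewrite -{2}[y]ord_predK grid_ordSr addrK.
Qed.

End CycleGrid.

Section GridDecomposition.
Variables (V : zmodType) (m N k : nat) (I : finType).
Variables (enc : V -> 'I_N) (a b : I -> V).
Hypotheses (m_gt1 : (1 < m)%N) (expV : forall v : V, v *+ m = 0).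
Hypotheses (enc_bij : bijective enc) (cardI : #|I| = k).
Hypothesis grid_bij : forall i, bijective (grid (a i) (b i) : 'I_m * 'I_m -> V).
Hypothesis steps_partition : forall d, d != 0 -> exists! i, d \in steps (a i) (b i).

Local Notation torus_adj := (cart_adj (@cycle_adj m) (@cycle_adj m)).
Local Notation copy i := (enc \o grid (a i) (b i)).

Lemma torus_adj_irr : irreflexive torus_adj.
Proof. by apply: cart_adj_irr; apply: cycle_adj_irr. Qed.

Lemma image_edges_copy i x y :
  ([set enc x; enc y] \in image_edges torus_adj (copy i)) = (y - x \in steps (a i) (b i)).
Proof.
apply/imset2P/idP => [[w w' _] | d_steps].
  rewrite inE /= => adj_ww' /(set2_inj) [] [/(bij_inj enc_bij)-> /(bij_inj enc_bij)->].
    exact: grid_adj_steps.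
  by rewrite -opprB steps_opp; apply: grid_adj_steps.
have [g gK Kg] := grid_bij i.
have [w' adj_w' gw'] := grid_steps_adj expV (g x) d_steps.
exists (g x) w' => //; first by rewrite inE.
by rewrite /= gw' Kg addrC subrK.
Qed.

Lemma card_image_edges_copy i E : E \in image_edges torus_adj (copy i) -> #|E| = 2.
Proof.
case/imset2P=> w w' _; rewrite inE /= => adj_ww' ->; apply/eqP/cards2P.
exists (copy i w), (copy i w'); split=> //.
rewrite (inj_eq (bij_inj enc_bij)) (inj_eq (bij_inj (grid_bij i))).
by apply: contraTneq adj_ww' => ->; rewrite torus_adj_irr.
Qed.

Theorem grid_edge_decomposition :
  exists F : 'I_k -> 'I_m * 'I_m -> 'I_N, edge_decomposition torus_adj F.
Proof.
have [idx idx_bij] := card_ord_bij cardI; have [sigma idxK sigmaK] := idx_bij.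
have [dec encK decK] := enc_bij.
exists (fun j => copy (sigma j)); split; [|split].
- by move=> j; apply: inj_comp; [apply: bij_inj | apply: bij_inj (grid_bij _)].
- by move=> j; apply: card_image_edges_copy.
move=> E /eqP/cards2P[X [Y [neqXY ->]]].
rewrite -[X]decK -[Y]decK in neqXY *.
have d_neq0 : dec Y - dec X != 0.
  by rewrite subr_eq0; apply: contraNneq neqXY => ->.
have [i [d_steps i_uniq]] := steps_partition d_neq0.
exists (idx i); split; first by rewrite image_edges_copy idxK.
by move=> j; rewrite image_edges_copy => /i_uniq ->; apply: sigmaK.
Qed.

End GridDecomposition.

Lemma mulrn_pchar_Zp2 p' (v : 'I_p'.+2 * 'I_p'.+2) : v *+ p'.+2 = 0.
Proof.
case: v => x y; rewrite pairMnE /= -[x *+ _]mulr_natr -[y *+ _]mulr_natr.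
by rewrite (pchar_Zp (p := p'.+2)) // !mulr0.
Qed.

Lemma lin_indep_det2 (R : comUnitRingType) (a b : R * R) (u v : R) :
  a.1 * b.2 - a.2 * b.1 \is a GRing.unit ->
  u * a.1 + v * b.1 = 0 -> u * a.2 + v * b.2 = 0 -> u = 0 /\ v = 0.
Proof.
move=> det_unit e1 e2; split; apply: (mulIr det_unit); rewrite mul0r.
  transitivity ((u * a.1 + v * b.1) * b.2 - (u * a.2 + v * b.2) * b.1); first by ring.
  by rewrite e1 e2 !mul0r subrr.
transitivity ((u * a.2 + v * b.2) * a.1 - (u * a.1 + v * b.1) * a.2); first by ring.
by rewrite e1 e2 !mul0r subrr.
Qed.

Lemma grid_Zp2E p' (a b : 'I_p'.+2 * 'I_p'.+2) (x y : 'I_p'.+2) :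
  grid a b (x, y) = (x%:R * a.1 + y%:R * b.1, x%:R * a.2 + y%:R * b.2).
Proof. by rewrite /grid [a *+ _]pairMnE [b *+ _]pairMnE !mulr_natl. Qed.

Lemma grid_inj_det2 p' (a b : 'I_p'.+2 * 'I_p'.+2) :
  a.1 * b.2 - a.2 * b.1 \is a GRing.unit -> injective (grid (m := p'.+2) a b).
Proof.
move=> det_unit [x y] [x' y']; rewrite !grid_Zp2E => eq_grid.
have e1 : x%:R * a.1 + y%:R * b.1 = x'%:R * a.1 + y'%:R * b.1 := congr1 fst eq_grid.
have e2 : x%:R * a.2 + y%:R * b.2 = x'%:R * a.2 + y'%:R * b.2 := congr1 snd eq_grid.
have [] := lin_indep_det2 (u := x%:R - x'%:R) (v := y%:R - y'%:R) det_unit.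
- transitivity ((x%:R * a.1 + y%:R * b.1) - (x'%:R * a.1 + y'%:R * b.1)); first by ring.
  by rewrite e1 subrr.
- transitivity ((x%:R * a.2 + y%:R * b.2) - (x'%:R * a.2 + y'%:R * b.2)); first by ring.
  by rewrite e2 subrr.
by move=> /eqP; rewrite subr_eq0 !natr_Zp => /eqP-> /eqP; rewrite subr_eq0 => /eqP->.
Qed.

Lemma val_natr_Zp p' x : val (x%:R : 'I_p'.+2) = (x %% p'.+2)%N.
Proof. by rewrite Zp_nat. Qed.

Section PairedSteps.
Variable k : nat.
Local Notation p := k.*2.+3.
Local Notation Zp2 := ('I_p * 'I_p)%type.
Local Notation step_index := ('I_k.+1 * 'I_k.+2)%type.

Definition pt (x y : nat) : Zp2 := (x%:R, y%:R).

(* Here h = k + 1, and the index (i.1, i.2) stands for x = i.1 + 1 and t = i.2. *)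
Definition step_a (i : step_index) : Zp2 := pt i.1.+1 (2 * i.2).
Definition step_b (i : step_index) : Zp2 :=
  if (i.2 < k.+1)%N then pt i.1.+1 (2 * i.2).+1 else pt 0 i.1.+1.

Definition positive (d : Zp2) : bool :=
  (0 < d.1 <= k.+1)%N || (d.1 == 0%N :> nat) && (0 < d.2 <= k.+1)%N.

Definition canon (d : Zp2) : Zp2 := if positive d then d else - d.

Definition step_class (d : Zp2) : step_index :=
  if d.1 == 0%N :> nat then (inord d.2.-1, ord_max) else (inord d.1.-1, inord d.2./2).

Lemma val_pt x y : (x < p)%N -> (y < p)%N ->
  (pt x y).1 = x :> nat /\ (pt x y).2 = y :> nat.
Proof. by move=> x_lt y_lt; rewrite !val_natr_Zp !modn_small. Qed.

Lemma val_step_a (x : 'I_k.+1) (t : 'I_k.+2) :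
  (step_a (x, t)).1 = x.+1 :> nat /\ (step_a (x, t)).2 = (2 * t)%N :> nat.
Proof. by apply: val_pt => /=; have := ltn_ord x; have := ltn_ord t; lia. Qed.

Lemma val_step_b_lt (x : 'I_k.+1) (t : 'I_k.+2) : (t < k.+1)%N ->
  (step_b (x, t)).1 = x.+1 :> nat /\ (step_b (x, t)).2 = (2 * t).+1 :> nat.
Proof.
by move=> t_lt; rewrite /step_b /= t_lt; apply: val_pt => /=; have := ltn_ord x; lia.
Qed.

Lemma val_step_b_max x :
  (step_b (x, ord_max)).1 = 0%N :> nat /\ (step_b (x, ord_max)).2 = x.+1 :> nat.
Proof. by rewrite /step_b /= ltnn; apply: val_pt; have := ltn_ord x; lia. Qed.

Lemma step_index_cases (t : 'I_k.+2) : (t < k.+1)%N \/ t = ord_max.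
Proof.
case: (ltnP t k.+1) => t_bound; [by left | right].
by apply: val_inj => /=; have := ltn_ord t; lia.
Qed.

Lemma positive_step_a i : positive (step_a i).
Proof.
by case: i => x t; rewrite /positive; case: (val_step_a x t) => -> _; have := ltn_ord x; lia.
Qed.

Lemma positive_step_b i : positive (step_b i).
Proof.
case: i => x t; rewrite /positive; have x_lt := ltn_ord x.
case: (step_index_cases t) => [/(val_step_b_lt x)[-> ->] | ->]; first lia.
by case: (val_step_b_max x) => -> ->; lia.
Qed.

Lemma step_class_step_a i : step_class (step_a i) = i.
Proof.
case: i => x t; rewrite /step_class; case: (val_step_a x t) => -> ->.
by rewrite mul2n doubleK !inord_val.
Qed.

Lemma step_class_step_b i : step_class (step_b i) = i.
Proof.
case: i => x t; rewrite /step_class.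
case: (step_index_cases t) => [/(val_step_b_lt x)[-> ->] | ->].
  by rewrite mul2n /= uphalf_double !inord_val.
by case: (val_step_b_max x) => -> ->; rewrite inord_val.
Qed.

Lemma positive_neq0 d : positive d -> d != 0.
Proof. by apply: contraTneq => ->. Qed.

Lemma positive_opp d : d != 0 -> positive (- d) = ~~ positive d.
Proof.
case: d => x y nz; rewrite /positive /=.
have := ltn_ord x; have := ltn_ord y.
have [x0 | x_pos] := posnP x; last by rewrite [((p - x) %% p)%N]modn_small; lia.
have y_pos : (0 < y)%N.
  by rewrite lt0n; apply: contraNneq nz => y0; apply/eqP; congr pair; apply: val_inj.
by rewrite x0 subn0 modnn /= modn_small; lia.
Qed.

Lemma Zp2_val_inj (d e : Zp2) : d.1 = e.1 :> nat -> d.2 = e.2 :> nat -> d = e.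
Proof. by case: d e => [x y] [x' y'] /= /val_inj-> /val_inj->. Qed.

Lemma positive_steps d :
  positive d -> d = step_a (step_class d) \/ d = step_b (step_class d).
Proof.
rewrite /positive /step_class => pos.
have d1_lt := ltn_ord d.1; have d2_lt := ltn_ord d.2.
have [d1_0 | d1_nz] := eqVneq (d.1 : nat) 0%N.
  right; case: (val_step_b_max (inord d.2.-1)) => b1 b2.
  by apply: Zp2_val_inj; rewrite ?b1 ?b2 ?d1_0 // inordK; lia.
have [d2_odd | d2_even] := boolP (odd d.2).
  have t_lt : (@inord k.+1 d.2./2 < k.+1)%N by rewrite inordK; lia.
  right; case: (val_step_b_lt (inord d.1.-1) t_lt) => b1 b2.
  by apply: Zp2_val_inj; rewrite ?b1 ?b2 !inordK; lia.
left; case: (val_step_a (inord d.1.-1) (inord d.2./2)) => a1 a2.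
by apply: Zp2_val_inj; rewrite ?a1 ?a2 !inordK; lia.
Qed.

Lemma canon_positive d : positive d -> canon d = d /\ canon (- d) = d.
Proof. by move=> pos; rewrite /canon pos positive_opp ?positive_neq0 // pos opprK. Qed.

Lemma positive_canon d : d != 0 -> positive (canon d).
Proof. by move=> nz; rewrite /canon; case: ifP => // /negbT; rewrite positive_opp. Qed.

Lemma canon_sign d : d = canon d \/ d = - canon d.
Proof. by rewrite /canon; case: ifP; [left | right; rewrite opprK]. Qed.

Lemma step_class_canon j d :
  d \in steps (step_a j) (step_b j) -> step_class (canon d) = j.
Proof.
have [ca cna] := canon_positive (positive_step_a j).
have [cb cnb] := canon_positive (positive_step_b j).
rewrite !inE => /or4P[] /eqP->;
  by rewrite ?ca ?cna ?cb ?cnb ?step_class_step_a ?step_class_step_b.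
Qed.

Lemma steps_partition d : d != 0 -> exists! i, d \in steps (step_a i) (step_b i).
Proof.
move=> nz; exists (step_class (canon d)); split; last by move=> j /step_class_canon.
set i := step_class _.
have c_steps : canon d \in steps (step_a i) (step_b i).
  by case: (positive_steps (positive_canon nz)) => <-; rewrite !inE eqxx ?orbT.
by case: (canon_sign d) => ->; rewrite ?steps_opp.
Qed.

Lemma det_steps_unit i : prime p ->
  (step_a i).1 * (step_b i).2 - (step_a i).2 * (step_b i).1 \is a GRing.unit.
Proof.
case: i => x t p_prime; have x_unit : (x.+1%:R : 'I_p) \is a GRing.unit.
  by rewrite (unitZpE _ (isT : (1 < p)%N)) prime_coprime // gtnNdvd //; have := ltn_ord x; lia.
rewrite /step_a /step_b /pt /=; case: ifP => _ /=; last by rewrite mulr0 subr0 unitrM x_unit.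
by rewrite -[(2 * t).+1]addn1 natrD (_ : _ - _ = x.+1%:R) //; ring.
Qed.

Lemma card_step_index : #|{: step_index}| = ((p ^ 2 - 1) %/ 4)%N.
Proof.
rewrite card_prod !card_ord (_ : (p ^ 2 - 1 = k.+1 * k.+2 * 4)%N) ?mulnK //.
by rewrite -mulnn; nia.
Qed.

End PairedSteps.

Lemma odd_gt1_eq n : odd n -> (1 < n)%N -> exists k, n = k.*2.+3.
Proof. by move=> n_odd n_gt1; exists n./2.-1; lia. Qed.

Theorem theorem1 (p : nat) (hp : prime p) (hodd : odd p) :
  exists F : 'I_((p ^ 2 - 1) %/ 4) -> 'I_p * 'I_p -> 'I_(p ^ 2),
    edge_decomposition (cart_adj (@cycle_adj p) (@cycle_adj p)) F.
Proof.
have [k p_eq] := odd_gt1_eq hodd (prime_gt1 hp); subst p.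
have [enc enc_bij] := card_ord_bij (card_ord_pair k.*2.+3).
apply: (grid_edge_decomposition (a := @step_a k) (b := @step_b k) (isT : 1 < k.*2.+3)%N
  (@mulrn_pchar_Zp2 k.*2.+1) enc_bij (card_step_index k)).
- by move=> i; apply: injF_bij; apply: grid_inj_det2; apply: det_steps_unit.
exact: steps_partition.
Qed.
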